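(* Let $X$ and $Y$ be nonempty compact Hausdorff spaces, and let $E$ be a complex locally convex space with $E\neq\{0_E\}$. Suppose $T:C(X,E)\to C(Y,E)$ is a map (not assumed linear) such that $$\operatorname{Ran}(TF-TG)\subset \operatorname{Ran}(F-G)\quad\text{for all } F,G\in C(X,E).$$ Then there exists a continuous map $\varphi:Y\to X$ such that $$TF=T(1\otimes 0_E)+F\circ\varphi\quad\text{for all } F\in C(X,E).$$ In particular, if in addition $T(1\otimes 0_E)=1\otimes 0_E$, then $T$ is linear.
   Context: A locally convex space is a complex vector space with a Hausdorff topology making addition and scalar multiplication continuous and having a basis of neighborhoods of $0_E$ consisting of convex sets. $C(X,E)$ denotes the complex vector space (pointwise operations) of all continuous functions $X\to E$. For $F\in C(X,E)$, $\operatorname{Ran}(F)=\{F(x):x\in X\}$. For $f\in C(X)$ (continuous complex-valued functions on $X$) and $u\in E$, $f\otimes u:X\to E$ is the function $x\mapsto f(x)u$; thus $1\otimes 0_E$ is the constant function with value $0_E$. *)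

From Stdlib Require Import Reals Lra List Classical FunctionalExtensionality PropExtensionality.
Open Scope R_scope.

Definition Cplx : Type := (R * R)%type.
Definition C0 : Cplx := (0, 0).
Definition C1 : Cplx := (1, 0).
Definition Cadd (z w : Cplx) : Cplx := (fst z + fst w, snd z + snd w).
Definition Cmul (z w : Cplx) : Cplx :=
  (fst z * fst w - snd z * snd w, fst z * snd w + snd z * fst w).
Definition Cneg (z : Cplx) : Cplx := (- fst z, - snd z).
Definition Cmod (z : Cplx) : R := sqrt (fst z * fst z + snd z * snd z).
Definition RtoC (t : R) : Cplx := (t, 0).

Record topology (X : Type) := Topology {
  is_open : (X -> Prop) -> Prop;
  open_full : is_open (fun _ => True);
  open_inter : forall U V, is_open U -> is_open V -> is_open (fun x => U x /\ V x);
  open_union : forall F : (X -> Prop) -> Prop,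
      (forall U, F U -> is_open U) -> is_open (fun x => exists U, F U /\ U x)
}.
Arguments is_open {X} t U.

Definition continuous {X Y : Type} (tX : topology X) (tY : topology Y) (f : X -> Y) : Prop :=
  forall V, is_open tY V -> is_open tX (fun x => V (f x)).

Definition hausdorff {X : Type} (tX : topology X) : Prop :=
  forall x y : X, x <> y -> exists U V, is_open tX U /\ is_open tX V /\ U x /\ V y /\
     (forall z, U z -> V z -> False).

Definition compact_space {X : Type} (tX : topology X) : Prop :=
  forall F : (X -> Prop) -> Prop,
    (forall U, F U -> is_open tX U) -> (forall x, exists U, F U /\ U x) ->
    exists l : list (X -> Prop), (forall U, In U l -> F U) /\
       (forall x, exists U, In U l /\ U x).

Definition prod_open {A B : Type} (tA : topology A) (tB : topology B) (W : A * B -> Prop) : Prop :=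
  forall p, W p -> exists U V, is_open tA U /\ is_open tB V /\ U (fst p) /\ V (snd p) /\
    (forall a b, U a -> V b -> W (a, b)).

Lemma prod_open_full {A B} (tA : topology A) (tB : topology B) :
  prod_open tA tB (fun _ => True).
Proof.
  intros p _; exists (fun _ => True), (fun _ => True);
  repeat split; auto using open_full.
Qed.

Lemma prod_open_inter {A B} (tA : topology A) (tB : topology B) U V :
  prod_open tA tB U -> prod_open tA tB V -> prod_open tA tB (fun x => U x /\ V x).
Proof.
  intros HU HV p [Up Vp].
  destruct (HU p Up) as (U1 & U2 & o1 & o2 & a1 & a2 & h).
  destruct (HV p Vp) as (V1 & V2 & p1 & p2 & b1 & b2 & k).
  exists (fun x => U1 x /\ V1 x), (fun x => U2 x /\ V2 x).
  repeat split; try apply open_inter; auto; try tauto.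
  - apply h; tauto.
  - apply k; tauto.
Qed.

Lemma prod_open_union {A B} (tA : topology A) (tB : topology B) (F : (A * B -> Prop) -> Prop) :
  (forall U, F U -> prod_open tA tB U) -> prod_open tA tB (fun x => exists U, F U /\ U x).
Proof.
  intros H p (U & FU & Up).
  destruct (H U FU p Up) as (U1 & U2 & o1 & o2 & a1 & a2 & h).
  exists U1, U2; repeat split; auto.
  intros a b h1 h2; exists U; split; auto.
Qed.

Definition prod_topology {A B : Type} (tA : topology A) (tB : topology B) : topology (A * B) :=
  @Topology (A * B) (prod_open tA tB) (prod_open_full tA tB) (prod_open_inter tA tB)
           (prod_open_union tA tB).

Definition C_open (U : Cplx -> Prop) : Prop :=
  forall z, U z -> exists eps, 0 < eps /\
    forall w, Cmod (Cadd w (Cneg z)) < eps -> U w.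

Lemma C_open_full : C_open (fun _ => True).
Proof. intros z _; exists 1; split; auto; lra. Qed.

Lemma C_open_inter U V : C_open U -> C_open V -> C_open (fun x => U x /\ V x).
Proof.
  intros HU HV z [Uz Vz].
  destruct (HU z Uz) as (e1 & e1p & h1); destruct (HV z Vz) as (e2 & e2p & h2).
  exists (Rmin e1 e2); split.
  - apply Rmin_glb_lt; auto.
  - intros w hw; split; [apply h1 | apply h2];
    eapply Rlt_le_trans; eauto; [apply Rmin_l | apply Rmin_r].
Qed.

Lemma C_open_union (F : (Cplx -> Prop) -> Prop) :
  (forall U, F U -> C_open U) -> C_open (fun x => exists U, F U /\ U x).
Proof.
  intros H z (U & FU & Uz).
  destruct (H U FU z Uz) as (e & ep & h).
  exists e; split; auto; intros w hw; exists U; auto.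
Qed.

Definition C_topology : topology Cplx :=
  @Topology Cplx C_open C_open_full C_open_inter C_open_union.

Record cvs := CVS {
  vcar :> Type;
  vzero : vcar;
  vadd : vcar -> vcar -> vcar;
  vopp : vcar -> vcar;
  vscal : Cplx -> vcar -> vcar;
  vaddA : forall x y z, vadd x (vadd y z) = vadd (vadd x y) z;
  vaddC : forall x y, vadd x y = vadd y x;
  vadd0 : forall x, vadd x vzero = x;
  vaddN : forall x, vadd x (vopp x) = vzero;
  vscalA : forall a b x, vscal a (vscal b x) = vscal (Cmul a b) x;
  vscal1 : forall x, vscal C1 x = x;
  vscalDr : forall a x y, vscal a (vadd x y) = vadd (vscal a x) (vscal a y);
  vscalDl : forall a b x, vscal (Cadd a b) x = vadd (vscal a x) (vscal b x)
}.
Arguments vzero {c}.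
Arguments vadd {c}.
Arguments vopp {c}.
Arguments vscal {c}.

Definition vsub {E : cvs} (x y : E) : E := vadd x (vopp y).

Definition convex {E : cvs} (V : E -> Prop) : Prop :=
  forall x y t, V x -> V y -> 0 <= t <= 1 ->
    V (vadd (vscal (RtoC t) x) (vscal (RtoC (1 - t)) y)).

Definition nbhd {X : Type} (tX : topology X) (x : X) (N : X -> Prop) : Prop :=
  exists U, is_open tX U /\ U x /\ (forall y, U y -> N y).

Definition locally_convex (E : cvs) (tE : topology E) : Prop :=
  hausdorff tE /\
  continuous (prod_topology tE tE) tE (fun p => vadd (fst p) (snd p)) /\
  continuous (prod_topology C_topology tE) tE (fun p => vscal (fst p) (snd p)) /\
  (forall N, nbhd tE vzero N ->
     exists V, nbhd tE vzero V /\ convex V /\ (forall x, V x -> N x)).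

Definition CXE {X : Type} (tX : topology X) (E : cvs) (tE : topology E) : Type :=
  { F : X -> E | continuous tX tE F }.

Lemma const_continuous {X Y : Type} (tX : topology X) (tY : topology Y) (c : Y) :
  continuous tX tY (fun _ => c).
Proof.
  intros V _.
  destruct (classic (V c)) as [h | h].
  - assert (e : (fun _ : X => V c) = (fun _ => True)).
    { apply FunctionalExtensionality.functional_extensionality; intros; apply propositional_extensionality; tauto. }
    rewrite e; apply open_full.
  - assert (e : (fun _ : X => V c) = (fun x => exists U, (fun _ => False) U /\ U x)).
    { apply FunctionalExtensionality.functional_extensionality; intros;
      apply propositional_extensionality; split; [tauto | intros (U & [] & _)]. }
    rewrite e; apply open_union; intros U [].
Qed.

Definition zeroCXE {X : Type} (tX : topology X) (E : cvs) (tE : topology E) : CXE tX E tE :=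
  exist _ (fun _ => vzero) (const_continuous tX tE vzero).

(* Fix y and put S F := (T F)(y) - (T 0)(y).  Then S 0 = 0 and S F - S G is a value
   of F - G, and it suffices to show that every such S is an evaluation F |-> F(x0).
   For u <> 0, the scalar functional A given by S (c u) = A(c) u on continuous
   c : X -> C has the same property.  Comparing A(c + l k) for complex l shows that A is
   real-linear on real functions; the nonnegative g with A(g) = 0 are closed under sums
   and each of them vanishes somewhere, so by compactness they have a common zero x0, and
   splitting k - A(k) into positive and negative parts gives A(k) = k(x0).  Back in E,
   if H vanishes wherever a Urysohn function k with k(x0) = 1 is nonzero, comparing H
   with l k u for large l, and using that the compact range of H meets no far point of a
   ray, gives S H = 0; local convexity then gives S H = 0 whenever H(x0) = 0.  Finally
   phi is continuous because F o phi is continuous for every F in C(X,E). *)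

From Stdlib Require Import Reals Lra List Classical ClassicalEpsilon
  FunctionalExtensionality PropExtensionality.
Open Scope R_scope.

Definition rcont {Z : Type} (tZ : topology Z) (k : Z -> R) : Prop :=
  forall z eps, 0 < eps -> exists U, is_open tZ U /\ U z /\
    forall w, U w -> Rabs (k w - k z) < eps.

Lemma open_of_local {Z : Type} (tZ : topology Z) (P : Z -> Prop) :
  (forall z, P z -> exists U, is_open tZ U /\ U z /\ forall w, U w -> P w) ->
  is_open tZ P.
Proof.
  intro h.
  assert (e : P = (fun z => exists U, (is_open tZ U /\ forall w, U w -> P w) /\ U z)).
  { apply functional_extensionality; intro z; apply propositional_extensionality; split.
    - intro hz; destruct (h z hz) as (U & o & uz & s); exists U; auto.
    - intros (U & (o & s) & uz); auto. }
  rewrite e; apply open_union; intros U [o _]; exact o.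
Qed.

Module UrysohnBridge.
From HB Require Import structures.
From mathcomp Require Import all_boot all_algebra.
From mathcomp Require Import finmap boolp classical_sets reals topology.
From mathcomp Require Import pseudometric_normed_Zmodule normed_module urysohn Rstruct.

Import numFieldNormedType.Exports.
Local Open Scope classical_set_scope.

(* [X] with the topology [tX], as a MathComp topological space; the point [x0] makes it
   pointed, which MathComp's characterization of compactness by covers requires. *)
Definition dtop {X : Type} (tX : topology X) (x0 : X) : Type := X.

Section Bridge.
Variables (X : Type) (tX : topology X) (x0 : X).

HB.instance Definition _ := gen_eqMixin (dtop tX x0).
HB.instance Definition _ := gen_choiceMixin (dtop tX x0).
HB.instance Definition _ := isPointed.Build (dtop tX x0) x0.

Lemma dtop_opI : setI_closed (is_open tX).
Proof. by move=> A B; exact: open_inter. Qed.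

Lemma dtop_bigU (I : Type) (f : I -> set (dtop tX x0)) :
  (forall i, is_open tX (f i)) -> is_open tX (\bigcup_(i in setT) f i).
Proof.
move=> fo.
have -> : \bigcup_(i in setT) f i = fun x => exists U, (exists i, f i = U) /\ U x.
  apply/funext => x; apply/propext; split => [[i _ fx]|[_ [[i <-] fx]]].
    by exists (f i); split => //; exists i.
  by exists i.
by apply: open_union => _ [i <-].
Qed.

HB.instance Definition _ :=
  isOpenTopological.Build (dtop tX x0) (open_full _ tX) dtop_opI dtop_bigU.

Lemma dtop_nbhsE (x : dtop tX x0) (A : set (dtop tX x0)) :
  nbhs x A <-> exists U, is_open tX U /\ U x /\ U `<=` A.
Proof.
split; first by case=> B [oB Bx BA]; exists B.
by case=> U [oU [Ux UA]]; exists U.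
Qed.

Lemma dtop_openP (A : set (dtop tX x0)) : open A <-> is_open tX A.
Proof.
rewrite openE; split => [Ao|oA x Ax]; last by apply/dtop_nbhsE; exists A; do !split.
by apply: open_of_local => x /Ao /dtop_nbhsE.
Qed.

Lemma dtop_hausdorff : hausdorff tX -> hausdorff_space (dtop tX x0).
Proof.
move=> hX; rewrite open_hausdorff => x y /eqP /hX [U [V [oU [oV [Ux [Vy UV]]]]]].
exists (U, V); first by rewrite !inE.
split; [exact/dtop_openP | exact/dtop_openP |].
by apply/eqP; rewrite -subset0 => z [/UV]; apply.
Qed.

Lemma dtop_compact : compact_space tX -> compact [set: dtop tX x0].
Proof.
move=> cX; rewrite (@compact_cover (dtop tX x0)) => I D f fo fcov.
have [|x|l [lF lcov]] := cX (fun U => exists i, D i /\ f i = U).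
- by move=> _ [i [Di <-]]; exact/dtop_openP/fo.
- by have [i Di fx] := fcov x Logic.I; exists (f i); split => //; exists i.
suff [D' D'D D'cov] : exists2 D' : {fset I}, {subset D' <= D} &
    forall x, (exists U, List.In U l /\ U x) -> cover [set` D'] f x.
  by exists D' => // x _; exact/D'cov/lcov.
elim: l lF {lcov} => [|U l IH] lF.
  by exists fset0 => [i|x [U []]]; rewrite ?inE.
have [i [Di fiU]] := lF U (or_introl erefl).
have [D' D'D D'cov] := IH (fun V lV => lF V (or_intror lV)).
exists (i |` D')%fset => [j|x [V [[<-|lV] Vx]]].
- by rewrite !inE => /orP[/eqP->|/D'D]; rewrite ?inE.
- by exists i; rewrite /= ?inE ?eqxx ?fiU.
- have [j D'j fj] := D'cov x (ex_intro _ V (conj lV Vx)).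
  by exists j; rewrite /= ?inE in D'j *; rewrite ?D'j ?orbT.
Qed.

Local Open Scope R_scope.

Lemma urysohn_bump : compact_space tX -> hausdorff tX ->
  forall W : X -> Prop, is_open tX W -> W x0 ->
  exists k : X -> R, rcont tX k /\ (forall x, 0 <= k x <= 1) /\ k x0 = 1 /\
    (forall x, ~ W x -> k x = 0).
Proof.
move=> cX hX W oW Wx0.
have hT := dtop_hausdorff hX.
have nT := compact_normal hT (dtop_compact cX).
have cl1 : closed [set x0 : dtop tX x0].
  exact: accessible_closed_set1 (hausdorff_accessible hT) x0.
have clW : closed (~` (W : set (dtop tX x0))) by apply/open_closedC/dtop_openP.
have dis : [set x0 : dtop tX x0] `&` ~` W = set0.
  by apply/seteqP; split => // x [-> /(_ Wx0)].
have := (@normal_separatorP (R : realType) _).1 nT _ _ cl1 clW dis.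
move=> /(@uniform_separatorP _ (R : realType)) [f [fc f01 f0 f1]].
have fx0 : f x0 = 0 by apply: f0; exists x0.
have fW x : ~ W x -> f x = 1 by move=> nWx; apply: f1; exists x.
have f01x x : 0 <= f x <= 1.
  have := f01 (f x) (imageT f x); rewrite /= in_itv /= => /andP[/RleP ? /RleP ?].
  by split.
exists (fun x => 1 - f x); split; last first.
  split; first by move=> x; have := f01x x; lra.
  by split; [rewrite fx0 | move=> x /fW ->]; ring.
move=> z eps eps0.
have /dtop_nbhsE [U [oU [Uz Ufz]]] := fc z _ (nbhsx_ballx (f z) eps (introT RltP eps0)).
exists U; split=> //; split=> // w /Ufz /=; rewrite -ball_normE /ball_ => /RltP.
replace (1 - f w - (1 - f z)) with (f z - f w) by ring.
by [].
Qed.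

End Bridge.
End UrysohnBridge.

Definition Csub (a b : Cplx) : Cplx := Cadd a (Cneg b).

Lemma Cplx_ext (a b : Cplx) : fst a = fst b -> snd a = snd b -> a = b.
Proof. destruct a, b; simpl; intros; subst; reflexivity. Qed.

Lemma Cmod_le (z : Cplx) : Cmod z <= Rabs (fst z) + Rabs (snd z).
Proof.
  unfold Cmod. destruct z as [a b]; simpl.
  pose proof (Rabs_pos a); pose proof (Rabs_pos b).
  rewrite <- (sqrt_square (Rabs a + Rabs b)) by lra.
  apply sqrt_le_1_alt.
  pose proof (Rsqr_abs a); pose proof (Rsqr_abs b). unfold Rsqr in *. nra.
Qed.

Section VectorAlgebra.
Context {E : cvs}.
Implicit Types (u v w : E) (a b : Cplx).

Lemma vadd0l v : vadd vzero v = v.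
Proof. rewrite vaddC; apply vadd0. Qed.

Lemma vadd_cancel v w : vadd v w = v -> w = vzero.
Proof.
  intro h.
  assert (e : vadd (vopp v) (vadd v w) = vadd (vopp v) v) by (rewrite h; reflexivity).
  rewrite vaddA, (vaddC _ (vopp v) v), vaddN, vadd0l in e. exact e.
Qed.

Lemma vscal_0r a : vscal a (@vzero E) = vzero.
Proof. apply (vadd_cancel (vscal a vzero)). rewrite <- vscalDr, vadd0. reflexivity. Qed.

Lemma vscal_0l v : vscal C0 v = vzero.
Proof.
  apply (vadd_cancel (vscal C0 v)). rewrite <- vscalDl. f_equal.
  apply Cplx_ext; simpl; ring.
Qed.

Lemma vopp_unique v w : vadd v w = vzero -> w = vopp v.
Proof.
  intro h.
  assert (e : vadd (vopp v) (vadd v w) = vadd (vopp v) vzero) by (rewrite h; reflexivity).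
  rewrite vaddA, (vaddC _ (vopp v) v), vaddN, vadd0l, vadd0 in e. exact e.
Qed.

Lemma vopp_scal v : vopp v = vscal (-1, 0) v.
Proof.
  symmetry; apply vopp_unique.
  rewrite <- (vscal1 E v) at 1. rewrite <- vscalDl, <- (vscal_0l v). f_equal.
  apply Cplx_ext; simpl; ring.
Qed.

Lemma vsub_scal a b v : vsub (vscal a v) (vscal b v) = vscal (Csub a b) v.
Proof.
  unfold vsub, Csub. rewrite vopp_scal, vscalA, <- vscalDl. f_equal.
  apply Cplx_ext; simpl; ring.
Qed.

Lemma vopp_add v w : vopp (vadd v w) = vadd (vopp v) (vopp w).
Proof. rewrite !vopp_scal, vscalDr. reflexivity. Qed.

Lemma vopp_opp v : vopp (vopp v) = v.
Proof. symmetry; apply vopp_unique. rewrite vaddC; apply vaddN. Qed.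

Lemma vsub_0r v : vsub v vzero = v.
Proof. unfold vsub. rewrite vopp_scal, vscal_0r. apply vadd0. Qed.

Lemma vsub_subr u v w : vsub (vsub u w) (vsub v w) = vsub u v.
Proof.
  unfold vsub. rewrite vopp_add, vopp_opp, vaddA, <- (vaddA _ u (vopp w)), (vaddC _ (vopp w)),
    vaddA, <- (vaddA _ _ (vopp w) w), (vaddC _ (vopp w) w), vaddN, vadd0.
  reflexivity.
Qed.

Lemma vsub_subl u v : vsub u (vsub u v) = v.
Proof.
  unfold vsub. rewrite vopp_add, vopp_opp, vaddA, vaddN, vadd0l. reflexivity.
Qed.

Lemma vsub_eq u v w : vsub u v = w -> u = vadd v w.
Proof.
  intros <-. unfold vsub. rewrite vaddC, <- vaddA, (vaddC _ (vopp v)), vaddN, vadd0.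
  reflexivity.
Qed.

Lemma vscal_eq0 a v : vscal a v = vzero -> v <> vzero -> a = C0.
Proof.
  intros h hv. apply NNPP; intro ha. apply hv.
  destruct a as [a1 a2].
  assert (hn : 0 < a1 * a1 + a2 * a2).
  { destruct (Req_dec a1 0); destruct (Req_dec a2 0); subst; [|nra|nra|nra].
    exfalso; apply ha; reflexivity. }
  assert (e : Cmul (a1 / (a1 * a1 + a2 * a2), - a2 / (a1 * a1 + a2 * a2)) (a1, a2) = C1)
    by (apply Cplx_ext; simpl; field; lra).
  rewrite <- (vscal1 E v), <- e, <- vscalA, h. apply vscal_0r.
Qed.

Lemma vscal_inj a b v : vscal a v = vscal b v -> v <> vzero -> a = b.
Proof.
  intros h hv.
  assert (e : vscal (Csub a b) v = vzero) by (rewrite <- vsub_scal, h; apply vaddN).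
  apply vscal_eq0 in e; auto. destruct a, b. injection e; intros.
  apply Cplx_ext; simpl in *; lra.
Qed.

End VectorAlgebra.

Section Continuity.
Context {Z : Type} (tZ : topology Z).

Lemma rcont_const a : rcont tZ (fun _ => a).
Proof.
  intros z eps he; exists (fun _ => True); repeat split; auto using open_full.
  intros; rewrite Rminus_diag, Rabs_R0; exact he.
Qed.

Lemma rcont_add k1 k2 : rcont tZ k1 -> rcont tZ k2 -> rcont tZ (fun z => k1 z + k2 z).
Proof.
  intros h1 h2 z eps he.
  destruct (h1 z (eps / 2)) as (U1 & o1 & u1 & s1); [lra|].
  destruct (h2 z (eps / 2)) as (U2 & o2 & u2 & s2); [lra|].
  exists (fun w => U1 w /\ U2 w); repeat split; auto using open_inter.
  intros w [a b]. specialize (s1 w a); specialize (s2 w b).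
  replace (k1 w + k2 w - (k1 z + k2 z)) with ((k1 w - k1 z) + (k2 w - k2 z)) by ring.
  eapply Rle_lt_trans; [apply Rabs_triang | lra].
Qed.

Lemma rcont_scal a k : rcont tZ k -> rcont tZ (fun z => a * k z).
Proof.
  intros h z eps he. pose proof (Rabs_pos a).
  destruct (h z (eps / (Rabs a + 1))) as (U & o & u & s).
  { apply Rdiv_lt_0_compat; lra. }
  exists U; repeat split; auto. intros w hw. specialize (s w hw).
  replace (a * k w - a * k z) with (a * (k w - k z)) by ring. rewrite Rabs_mult.
  apply (Rmult_lt_compat_r (Rabs a + 1)) in s; [|lra].
  unfold Rdiv in s. rewrite Rmult_assoc, Rinv_l in s by lra.
  pose proof (Rabs_pos (k w - k z)). nra.
Qed.

Lemma rcont_pos_part k : rcont tZ k -> rcont tZ (fun z => Rmax (k z) 0).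
Proof.
  intros h z eps he. destruct (h z eps he) as (U & o & u & s).
  exists U; repeat split; auto. intros w hw. specialize (s w hw).
  unfold Rmax; destruct (Rle_dec (k w) 0); destruct (Rle_dec (k z) 0);
    revert s; unfold Rabs; repeat destruct Rcase_abs; intros; lra.
Qed.

Lemma open_rlt k a : rcont tZ k -> is_open tZ (fun z => a < k z).
Proof.
  intro h; apply open_of_local; intros z hz.
  destruct (h z (k z - a)) as (U & o & u & s); [lra|].
  exists U; repeat split; auto. intros w hw; specialize (s w hw).
  revert s; unfold Rabs; destruct Rcase_abs; intros; lra.
Qed.

Definition ccont (c : Z -> Cplx) : Prop :=
  rcont tZ (fun z => fst (c z)) /\ rcont tZ (fun z => snd (c z)).

Lemma ccont_const a : ccont (fun _ => a).
Proof. split; apply rcont_const. Qed.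

Lemma ccont_real k : rcont tZ k -> ccont (fun z => RtoC (k z)).
Proof. intro h; split; simpl; [exact h | apply rcont_const]. Qed.

Lemma ccont_add c d : ccont c -> ccont d -> ccont (fun z => Cadd (c z) (d z)).
Proof. intros [c1 c2] [d1 d2]; split; apply rcont_add; auto. Qed.

Lemma ccont_scal_real a k : rcont tZ k -> ccont (fun z => Cmul a (RtoC (k z))).
Proof.
  intro h; split; simpl;
    [ replace (fun z => fst a * k z - snd a * 0) with (fun z => fst a * k z)
    | replace (fun z => fst a * 0 + snd a * k z) with (fun z => snd a * k z) ];
    try (apply functional_extensionality; intro; ring); apply rcont_scal; exact h.
Qed.

Lemma ccont_Cmod c : ccont c -> forall z eps, 0 < eps ->
  exists U, is_open tZ U /\ U z /\ forall w, U w -> Cmod (Csub (c w) (c z)) < eps.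
Proof.
  intros [h1 h2] z eps he.
  destruct (h1 z (eps / 2)) as (U1 & o1 & u1 & s1); [lra|].
  destruct (h2 z (eps / 2)) as (U2 & o2 & u2 & s2); [lra|].
  exists (fun w => U1 w /\ U2 w); repeat split; auto using open_inter.
  intros w [a b]. eapply Rle_lt_trans; [apply Cmod_le|].
  specialize (s1 w a); specialize (s2 w b). simpl in *. unfold Rminus in *. lra.
Qed.

Context {E : cvs} (tE : topology E).

Lemma cont_smul c (G : Z -> E) :
  continuous (prod_topology C_topology tE) tE (fun p => vscal (fst p) (snd p)) ->
  ccont c -> continuous tZ tE G -> continuous tZ tE (fun z => vscal (c z) (G z)).
Proof.
  intros Hs hc hG O hO. apply open_of_local. intros z hz.
  destruct (Hs O hO (c z, G z) hz) as (U1 & V1 & o1 & p1 & a1 & b1 & s1). simpl in *.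
  destruct (o1 (c z) a1) as (eps & he & sU).
  destruct (ccont_Cmod c hc z eps he) as (U2 & o2 & u2 & s2).
  exists (fun w => U2 w /\ V1 (G w)); repeat split; auto.
  - apply open_inter; [exact o2 | apply (hG V1 p1)].
  - intros w [a b]. apply (s1 (c w) (G w)); [apply sU, s2 | ]; auto.
Qed.

Lemma cont_add (G1 G2 : Z -> E) :
  continuous (prod_topology tE tE) tE (fun p => vadd (fst p) (snd p)) ->
  continuous tZ tE G1 -> continuous tZ tE G2 -> continuous tZ tE (fun z => vadd (G1 z) (G2 z)).
Proof.
  intros Ha h1 h2 O hO. apply open_of_local. intros z hz.
  destruct (Ha O hO (G1 z, G2 z) hz) as (U1 & V1 & o1 & p1 & a1 & b1 & s1). simpl in *.
  exists (fun w => U1 (G1 w) /\ V1 (G2 w)); repeat split; auto.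
  - apply open_inter; [apply (h1 U1 o1) | apply (h2 V1 p1)].
  - intros w [a b]. apply (s1 (G1 w) (G2 w)); auto.
Qed.

Lemma cont_sub (G1 G2 : Z -> E) :
  continuous (prod_topology tE tE) tE (fun p => vadd (fst p) (snd p)) ->
  continuous (prod_topology C_topology tE) tE (fun p => vscal (fst p) (snd p)) ->
  continuous tZ tE G1 -> continuous tZ tE G2 -> continuous tZ tE (fun z => vsub (G1 z) (G2 z)).
Proof.
  intros Ha Hs h1 h2. unfold vsub.
  replace (fun z => vadd (G1 z) (vopp (G2 z))) with (fun z => vadd (G1 z) (vscal (-1, 0) (G2 z)))
    by (apply functional_extensionality; intro; rewrite vopp_scal; reflexivity).
  apply cont_add; auto. apply cont_smul; auto. apply ccont_const.
Qed.

Lemma open_neq (G : Z -> E) e :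
  hausdorff tE -> continuous tZ tE G -> is_open tZ (fun z => G z <> e).
Proof.
  intros hE hG. apply open_of_local. intros z hz.
  destruct (hE (G z) e hz) as (U & V & oU & oV & uz & ve & d).
  exists (fun w => U (G w)); split; [apply (hG U oU) | split; auto].
  intros w hw he; apply (d (G w) hw); rewrite he; exact ve.
Qed.

End Continuity.

Lemma Cmod_RtoC t : Cmod (RtoC t) = Rabs t.
Proof. unfold Cmod; simpl. rewrite Rmult_0_l, Rplus_0_r. apply sqrt_Rsqr_abs. Qed.

Section Compactness.
Context {X : Type} (tX : topology X).
Hypothesis cX : compact_space tX.

Lemma compact_local_global (Q : (X -> Prop) -> Prop) :
  Q (fun _ => False) ->
  (forall U V, (forall x, V x -> U x) -> Q U -> Q V) ->
  (forall U V, Q U -> Q V -> Q (fun x => U x \/ V x)) ->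
  (forall x, exists U, is_open tX U /\ U x /\ Q U) ->
  Q (fun _ => True).
Proof.
  intros Q0 Qsub Qunion Qloc.
  destruct (cX (fun U => is_open tX U /\ Q U)) as (l & hl & cov).
  - intros U [o _]; exact o.
  - intro x. destruct (Qloc x) as (U & o & ux & q). exists U; auto.
  - apply (Qsub (fun x => exists U, In U l /\ U x)); [intros x _; apply cov |].
    clear cov. induction l as [|U l IH].
    + apply (Qsub (fun _ => False)); [intros x (U & [] & _) | exact Q0].
    + apply (Qsub (fun x => U x \/ exists V, In V l /\ V x)).
      * intros x (V & [<- | iV] & vx); [left | right; exists V]; auto.
      * apply Qunion; [apply hl; left; reflexivity |].
        apply IH; intros V iV; apply hl; right; exact iV.
Qed.

Context {E : cvs} (tE : topology E).
Hypothesis hE : hausdorff tE.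
Hypothesis Hs : continuous (prod_topology C_topology tE) tE (fun p => vscal (fst p) (snd p)).

Lemma ray_escape (G : X -> E) w : continuous tX tE G -> w <> vzero ->
  exists r0, forall r x, r0 < r -> G x <> vscal (RtoC r) w.
Proof.
  intros hG hw.
  destruct (hE w vzero hw) as (U & N & oU & oN & Uw & N0 & disj).
  (* By compactness, small multiples of the values of G lie in a neighbourhood N of 0
     that misses w, whereas G x = r w would give (1/r) G x = w. *)
  assert (small : exists eps, 0 < eps /\
            forall x, True -> forall a, Cmod a < eps -> N (vscal a (G x))).
  { apply (compact_local_global
      (fun O => exists eps, 0 < eps /\ forall x, O x -> forall a, Cmod a < eps -> N (vscal a (G x)))).
    - exists 1; split; [lra | intros x []].
    - intros O O' sub (eps & he & h). exists eps; split; auto.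
    - intros O O' (e1 & he1 & h1) (e2 & he2 & h2).
      exists (Rmin e1 e2); split; [apply Rmin_glb_lt; auto|].
      intros x [ox | ox] a ha; [apply h1 | apply h2]; auto;
        eapply Rlt_le_trans; eauto; [apply Rmin_l | apply Rmin_r].
    - intro x.
      assert (hN : N (vscal (fst (C0, G x)) (snd (C0, G x)))) by (simpl; rewrite vscal_0l; auto).
      destruct (Hs N oN (C0, G x) hN) as (U1 & V1 & oU1 & oV1 & u1 & v1 & s). simpl in *.
      destruct (oU1 C0 u1) as (eps & he & hb).
      exists (fun x => V1 (G x)); repeat split; auto.
      exists eps; split; auto. intros x' vx a ha. apply (s a (G x')); auto.
      apply hb. replace (Cadd a (Cneg C0)) with a by (apply Cplx_ext; simpl; ring). exact ha. }
  destruct small as (eps & he & small).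
  exists (/ eps). intros r x hr hx.
  assert (rpos : 0 < r) by (pose proof (Rinv_0_lt_compat eps he); lra).
  assert (hm : Cmod (RtoC (/ r)) < eps).
  { rewrite Cmod_RtoC, Rabs_right by (left; apply Rinv_0_lt_compat; exact rpos).
    rewrite <- (Rinv_inv eps). apply Rinv_lt_contravar; auto.
    apply Rmult_lt_0_compat; auto. apply Rinv_0_lt_compat; auto. }
  pose proof (small x I _ hm) as hN. rewrite hx, vscalA in hN.
  replace (Cmul (RtoC (/ r)) (RtoC r)) with C1 in hN
    by (apply Cplx_ext; simpl; field; lra).
  rewrite vscal1 in hN. exact (disj w Uw hN).
Qed.

End Compactness.

Lemma Cplx_affine_real_slope (q : Cplx -> Cplx) :
  (forall l m, exists t : R, Csub (q l) (q m) = Cmul (Csub l m) (RtoC t)) ->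
  exists a : R, forall l, q l = Cadd (q C0) (Cmul l (RtoC a)).
Proof.
  intro hq.
  assert (hray : forall l, exists r : R, q l = Cadd (q C0) (Cmul l (RtoC r))).
  { intro l. destruct (hq l C0) as (r & h). exists r.
    destruct (q l), (q C0), l. injection h; intros.
    apply Cplx_ext; simpl in *; lra. }
  assert (hpair : forall l m rl rm,
            q l = Cadd (q C0) (Cmul l (RtoC rl)) -> q m = Cadd (q C0) (Cmul m (RtoC rm)) ->
            exists t, Cmul l (RtoC rl) = Cadd (Cmul m (RtoC rm)) (Cmul (Csub l m) (RtoC t))).
  { intros l m rl rm hl hm. destruct (hq l m) as (t & h). exists t.
    rewrite hl, hm in h. destruct (q C0), l, m. injection h; intros.
    apply Cplx_ext; simpl in *; lra. }
  destruct (hray C1) as (r1 & h1). destruct (hray (0, 1)) as (ri & hi).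
  destruct (hpair C1 (0, 1) r1 ri h1 hi) as (t & e).
  injection e; simpl; intros e2 e1.
  exists r1. intros [l1 l2]. destruct (hray (l1, l2)) as (rl & hl). rewrite hl. f_equal.
  destruct (Req_dec l2 0) as [z | nz].
  - subst l2. destruct (hpair (l1, 0) (0, 1) rl ri hl hi) as (t' & f).
    injection f; simpl; intros f2 f1. apply Cplx_ext; simpl; nra.
  - destruct (hpair (l1, l2) C1 rl r1 hl h1) as (t' & f).
    injection f; simpl; intros f2 f1.
    assert (rl = t') by (apply (Rmult_eq_reg_l l2); auto; nra).
    apply Cplx_ext; simpl; nra.
Qed.

Section RangeFunctional.
Context {X : Type} (tX : topology X).
Hypothesis cX : compact_space tX.
Variable A : (X -> Cplx) -> Cplx.
Hypothesis A_range : forall c, ccont tX c -> exists x, A c = c x.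
Hypothesis A_diff : forall c d, ccont tX c -> ccont tX d ->
  exists x, Csub (A c) (A d) = Csub (c x) (d x).

Definition realc (k : X -> R) : X -> Cplx := fun x => RtoC (k x).

Definition areal (k : X -> R) : R := fst (A (realc k)).

Lemma A_realc k : rcont tX k -> A (realc k) = RtoC (areal k).
Proof.
  intro hk. destruct (A_range (realc k) (ccont_real tX k hk)) as (x & h).
  unfold areal. rewrite h. reflexivity.
Qed.

Lemma A_line c k : ccont tX c -> rcont tX k ->
  exists a : R, forall l, A (fun x => Cadd (c x) (Cmul l (RtoC (k x)))) = Cadd (A c) (Cmul l (RtoC a)).
Proof.
  intros hc hk.
  replace (A c) with (A (fun x => Cadd (c x) (Cmul C0 (RtoC (k x))))).
  - apply (Cplx_affine_real_slope (fun l => A (fun x => Cadd (c x) (Cmul l (RtoC (k x)))))).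
    intros l m.
    destruct (A_diff _ _ (ccont_add tX _ _ hc (ccont_scal_real tX l k hk))
                          (ccont_add tX _ _ hc (ccont_scal_real tX m k hk))) as (x & h).
    exists (k x). rewrite h. apply Cplx_ext; simpl; ring.
  - f_equal. apply functional_extensionality; intro x. apply Cplx_ext; simpl; ring.
Qed.

Lemma A_real_comb k1 k2 l : rcont tX k1 -> rcont tX k2 ->
  A (fun x => Cadd (RtoC (k1 x)) (Cmul l (RtoC (k2 x)))) =
  Cadd (RtoC (areal k1)) (Cmul l (RtoC (areal k2))).
Proof.
  intros h1 h2.
  destruct (A_line (realc k1) k2 (ccont_real tX k1 h1) h2) as (a1 & e1).
  destruct (A_line (fun _ => C0) k2 (ccont_const tX C0) h2) as (a2 & e2).
  assert (A0 : A (fun _ => C0) = C0) by (destruct (A_range _ (ccont_const tX C0)) as (x & ->); auto).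
  assert (e1' : forall l, A (fun x => Cadd (RtoC (k1 x)) (Cmul l (RtoC (k2 x)))) =
                          Cadd (RtoC (areal k1)) (Cmul l (RtoC a1))).
  { intro l'. rewrite <- (A_realc k1 h1). exact (e1 l'). }
  rewrite A0 in e2.
  assert (ea2 : areal k2 = a2).
  { assert (e := e2 C1). unfold areal, realc.
    replace (fun x => RtoC (k2 x)) with (fun x => Cadd C0 (Cmul C1 (RtoC (k2 x))))
      by (apply functional_extensionality; intro; apply Cplx_ext; simpl; ring).
    rewrite e. simpl. ring. }
  assert (ea1 : a1 = a2).
  { destruct (A_diff _ _ (ccont_add tX _ _ (ccont_real tX k1 h1) (ccont_scal_real tX (0, 1) k2 h2))
                         (ccont_add tX _ _ (ccont_const tX C0) (ccont_scal_real tX (0, 1) k2 h2)))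
      as (x & h).
    rewrite e1', e2 in h. injection h; simpl; intros; lra. }
  rewrite e1', ea1, ea2. reflexivity.
Qed.

Definition A_null (g : X -> R) : Prop :=
  rcont tX g /\ (forall x, 0 <= g x) /\ areal g = 0.

Lemma A_null_common_zero : exists x0, forall g, A_null g -> g x0 = 0.
Proof.
  apply NNPP; intro hn.
  assert (pos : forall x, exists g, A_null g /\ 0 < g x).
  { intro x. apply NNPP; intro h. apply hn. exists x. intros g hg. apply NNPP; intro h'.
    apply h. exists g; split; auto. destruct hg as (_ & p & _). specialize (p x). lra. }
  assert (glob : exists g, A_null g /\ forall x, True -> 0 < g x).
  { apply (compact_local_global tX cX
      (fun O => exists g, A_null g /\ forall x, O x -> 0 < g x)).
    - exists (fun _ => 0). repeat split; [apply rcont_const | intro; lra | | intros x []].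
      unfold areal. replace (A (realc (fun _ => 0))) with (A (fun _ => C0)) by reflexivity.
      destruct (A_range _ (ccont_const tX C0)) as (x & ->). reflexivity.
    - intros O O' sub (g & hg & h). exists g; auto.
    - intros O O' (g1 & (c1 & p1 & z1) & h1) (g2 & (c2 & p2 & z2) & h2).
      exists (fun x => g1 x + g2 x). repeat split.
      + apply rcont_add; auto.
      + intro x; specialize (p1 x); specialize (p2 x); lra.
      + unfold areal, realc.
        replace (fun x => RtoC (g1 x + g2 x)) with (fun x => Cadd (RtoC (g1 x)) (Cmul C1 (RtoC (g2 x))))
          by (apply functional_extensionality; intro; apply Cplx_ext; simpl; ring).
        rewrite A_real_comb by auto. simpl. rewrite z1, z2. ring.
      + intros x [o | o]; [specialize (h1 x o); specialize (p2 x) | specialize (h2 x o); specialize (p1 x)]; lra.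
    - intro x. destruct (pos x) as (g & hg & gx). exists (fun x => 0 < g x).
      split; [apply open_rlt, hg | split; [exact gx | exists g; auto]]. }
  destruct glob as (g & (hg & _ & zg) & gpos).
  destruct (A_range _ (ccont_real tX g hg)) as (x & hx).
  specialize (gpos x I). unfold areal, realc in zg. rewrite hx in zg. simpl in zg. lra.
Qed.

Section AtZero.
Variable x0 : X.
Hypothesis hx0 : forall g, A_null g -> g x0 = 0.

(* With p, n the positive and negative parts of k - areal k, linearity gives
   A p = A n, while A (p + i n) = p x + i n x for some x with p x * n x = 0. *)
Lemma areal_eval k : rcont tX k -> areal k = k x0.
Proof.
  intro hk. set (t := areal k).
  set (p := fun x => Rmax (k x + - t) 0).
  set (n := fun x => Rmax (-1 * k x + t) 0).
  assert (hp : rcont tX p) by (apply rcont_pos_part, rcont_add; [auto | apply rcont_const]).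
  assert (hn : rcont tX n)
    by (apply rcont_pos_part, rcont_add; [apply rcont_scal; auto | apply rcont_const]).
  assert (pn : forall x, p x * n x = 0).
  { intro x; unfold p, n, Rmax. destruct Rle_dec; destruct Rle_dec; nra. }
  assert (p_n : forall x, p x - n x = k x - t).
  { intro x; unfold p, n, Rmax. destruct Rle_dec; destruct Rle_dec; lra. }
  assert (eqpn : areal p = areal n).
  { assert (e1 := A_real_comb p n (-1, 0) hp hn).
    assert (e2 := A_real_comb k (fun _ => 1) (RtoC (- t)) hk (rcont_const tX 1)).
    assert (one : areal (fun _ => 1) = 1).
    { destruct (A_range _ (ccont_const tX C1)) as (x & hx).
      unfold areal. change (realc (fun _ => 1)) with (fun _ : X => C1). rewrite hx. reflexivity. }
    cbv beta in e2.
    replace (fun x => Cadd (RtoC (p x)) (Cmul (-1, 0) (RtoC (n x))))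
      with (fun x => Cadd (RtoC (k x)) (Cmul (RtoC (- t)) (RtoC 1))) in e1.
    - rewrite e1, one in e2. injection e2; intros. unfold t in *. lra.
    - apply functional_extensionality; intro x. pose proof (p_n x). apply Cplx_ext; simpl; lra. }
  assert (zp : areal p = 0).
  { destruct (A_range _ (ccont_add tX _ _ (ccont_real tX p hp) (ccont_scal_real tX (0, 1) n hn)))
      as (x & hx).
    rewrite (A_real_comb p n (0, 1) hp hn) in hx. injection hx; simpl; intros.
    specialize (pn x). nra. }
  assert (null_p : A_null p) by (repeat split; auto; intro; apply Rmax_r).
  assert (null_n : A_null n) by (repeat split; auto; [intro; apply Rmax_r | congruence]).
  pose proof (hx0 p null_p) as e3. pose proof (hx0 n null_n) as e4.
  pose proof (p_n x0). lra.
Qed.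

Lemma A_eval c : ccont tX c -> A c = c x0.
Proof.
  intros [h1 h2].
  replace c with (fun x => Cadd (RtoC (fst (c x))) (Cmul (0, 1) (RtoC (snd (c x))))).
  - rewrite A_real_comb by auto. rewrite !areal_eval by auto. apply Cplx_ext; simpl; ring.
  - apply functional_extensionality; intro x. apply Cplx_ext; simpl; ring.
Qed.

End AtZero.

Theorem range_functional_eval : exists x0, forall c, ccont tX c -> A c = c x0.
Proof.
  destruct A_null_common_zero as (x0 & hx0). exists x0. intros c hc. apply A_eval; auto.
Qed.

End RangeFunctional.

Section FunctionSpace.
Context {X : Type} (tX : topology X) {E : cvs} (tE : topology E).
Hypothesis Ha : continuous (prod_topology tE tE) tE (fun p => vadd (fst p) (snd p)).
Hypothesis Hs : continuous (prod_topology C_topology tE) tE (fun p => vscal (fst p) (snd p)).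

Definition cxe_const (e : E) : CXE tX E tE := exist _ (fun _ => e) (const_continuous tX tE e).

Definition cxe_sub (F G : CXE tX E tE) : CXE tX E tE :=
  exist _ (fun x => vsub (proj1_sig F x) (proj1_sig G x))
    (cont_sub tX tE _ _ Ha Hs (proj2_sig F) (proj2_sig G)).

(* Junk value [F] when [c] is not continuous. *)
Definition smul (c : X -> Cplx) (F : CXE tX E tE) : CXE tX E tE :=
  match excluded_middle_informative (ccont tX c) with
  | left hc => exist _ (fun x => vscal (c x) (proj1_sig F x)) (cont_smul tX tE c _ Hs hc (proj2_sig F))
  | right _ => F
  end.

Lemma smul_val c F x : ccont tX c -> proj1_sig (smul c F) x = vscal (c x) (proj1_sig F x).
Proof. intro hc. unfold smul. destruct excluded_middle_informative; [reflexivity | contradiction]. Qed.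

End FunctionSpace.

Lemma continuous_of_comp {X Y : Type} (tX : topology X) (tY : topology Y)
  {E : cvs} (tE : topology E) (phi : Y -> X) :
  compact_space tX -> hausdorff tX -> hausdorff tE ->
  continuous (prod_topology C_topology tE) tE (fun p => vscal (fst p) (snd p)) ->
  (exists u : E, u <> vzero) ->
  (forall F : CXE tX E tE, continuous tY tE (fun y => proj1_sig F (phi y))) ->
  continuous tY tX phi.
Proof.
  intros cX hX hE Hs (u & hu) hF V oV. apply open_of_local. intros y hy.
  destruct (UrysohnBridge.urysohn_bump X tX (phi y) cX hX V oV hy) as (k & hk & _ & ky & kV).
  set (F := smul tX tE Hs (realc k) (cxe_const tX tE u)).
  assert (hFk : forall y', proj1_sig F (phi y') = vscal (RtoC (k (phi y'))) u)
    by (intro y'; unfold F; rewrite smul_val by (apply ccont_real, hk); reflexivity).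
  exists (fun y' => proj1_sig F (phi y') <> vzero). repeat split.
  - apply (open_neq tY tE); auto.
  - rewrite hFk, ky. intro e. apply vscal_eq0 in e; auto. injection e; lra.
  - intros y' hy'. apply NNPP; intro nV. apply hy'. rewrite hFk, (kV _ nV). apply vscal_0l.
Qed.

Section RangeOperator.
Context {X : Type} (tX : topology X) {E : cvs} (tE : topology E).
Hypotheses (cX : compact_space tX) (hX : hausdorff tX) (hE : hausdorff tE).
Hypothesis Ha : continuous (prod_topology tE tE) tE (fun p => vadd (fst p) (snd p)).
Hypothesis Hs : continuous (prod_topology C_topology tE) tE (fun p => vscal (fst p) (snd p)).
Hypothesis convex_nbhds : forall N, nbhd tE vzero N ->
  exists V, nbhd tE vzero V /\ convex V /\ (forall x, V x -> N x).
Variable S : CXE tX E tE -> E.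
Hypothesis S_diff : forall F G : CXE tX E tE,
  exists x, vsub (S F) (S G) = vsub (proj1_sig F x) (proj1_sig G x).
Hypothesis S_zero : S (zeroCXE tX E tE) = vzero.

Local Notation smul := (smul tX tE Hs).

Lemma S_range F : exists x, S F = proj1_sig F x.
Proof.
  destruct (S_diff F (zeroCXE tX E tE)) as (x & h). exists x.
  rewrite S_zero in h. simpl in h. rewrite !vsub_0r in h. exact h.
Qed.

Section Direction.
Variable u : E.
Hypothesis hu : u <> vzero.

Definition tensor (c : X -> Cplx) : CXE tX E tE := smul c (cxe_const tX tE u).

Definition coef (c : X -> Cplx) : Cplx := epsilon (inhabits C0) (fun a => S (tensor c) = vscal a u).

Lemma S_tens_coef c : ccont tX c -> S (tensor c) = vscal (coef c) u /\ exists x, coef c = c x.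
Proof.
  intro hc. destruct (S_range (tensor c)) as (x & hx).
  unfold tensor in hx. rewrite smul_val in hx by exact hc. simpl in hx.
  assert (hcoef : S (tensor c) = vscal (coef c) u) by (unfold coef; apply epsilon_spec; exists (c x); exact hx).
  split; [exact hcoef | exists x]. apply (vscal_inj _ _ u); [|exact hu].
  rewrite <- hcoef. exact hx.
Qed.

Lemma coef_diff c d : ccont tX c -> ccont tX d ->
  exists x, Csub (coef c) (coef d) = Csub (c x) (d x).
Proof.
  intros hc hd. destruct (S_diff (tensor c) (tensor d)) as (x & h). exists x.
  rewrite (proj1 (S_tens_coef c hc)), (proj1 (S_tens_coef d hd)) in h.
  unfold tensor in h. rewrite !smul_val in h by auto. simpl in h. rewrite !vsub_scal in h.
  exact (vscal_inj _ _ u h hu).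
Qed.

Lemma S_tens_eval : exists x0, forall c, ccont tX c -> S (tensor c) = vscal (c x0) u.
Proof.
  destruct (range_functional_eval tX cX coef (fun c hc => proj2 (S_tens_coef c hc)) coef_diff)
    as (x0 & h0).
  exists x0. intros c hc. rewrite <- h0 by exact hc. apply S_tens_coef, hc.
Qed.

Section AtPoint.
Variable x0 : X.
Hypothesis hx0 : forall c, ccont tX c -> S (tensor c) = vscal (c x0) u.

(* S H - l u = H x - l k(x) u for some x; a suitable large l puts S H on the line C u
   and then forces it to 0, since the compact range of H misses far points of rays. *)
Section Bump.
Variables (H : CXE tX E tE) (k : X -> R).
Hypotheses (hk : rcont tX k) (k01 : forall x, 0 <= k x <= 1) (kx0 : k x0 = 1).
Hypothesis H_off : forall x, k x <> 0 -> proj1_sig H x = vzero.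

Lemma S_bump_diff l : exists x,
  vsub (S H) (vscal l u) = vsub (proj1_sig H x) (vscal (Cmul l (RtoC (k x))) u).
Proof.
  destruct (S_diff H (tensor (fun x => Cmul l (RtoC (k x))))) as (x & h). exists x.
  assert (hc := ccont_scal_real tX l k hk).
  rewrite hx0 in h by exact hc. unfold tensor in h. rewrite smul_val in h by exact hc. simpl in h.
  rewrite kx0 in h. replace (Cmul l (RtoC 1)) with l in h by (apply Cplx_ext; simpl; ring).
  exact h.
Qed.

Lemma S_bump_on_line : exists c, S H = vscal c u.
Proof.
  apply NNPP; intro off_line.
  assert (hG := cont_sub tX tE (fun _ => S H) _ Ha Hs (const_continuous tX tE (S H)) (proj2_sig H)).
  destruct (ray_escape tX cX tE hE Hs _ u hG hu) as (r0 & escape).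
  set (r := Rabs r0 + 1).
  destruct (S_bump_diff (RtoC r)) as (x & h).
  destruct (Req_dec (k x) 0) as [kx | kx].
  - rewrite kx in h. replace (Cmul (RtoC r) (RtoC 0)) with C0 in h by (apply Cplx_ext; simpl; ring).
    rewrite vscal_0l, vsub_0r in h.
    apply (escape r x); [unfold r; pose proof (Rle_abs r0); lra|].
    cbv beta. rewrite <- h, vsub_subl. reflexivity.
  - rewrite (H_off x kx), <- (vscal_0l u), vsub_scal in h.
    apply off_line. apply vsub_eq in h. rewrite h, <- vscalDl. eexists; reflexivity.
Qed.

Lemma S_bump_eq0 : S H = vzero.
Proof.
  destruct S_bump_on_line as (c & hc).
  apply NNPP; intro hd.
  destruct (ray_escape tX cX tE hE Hs _ (S H) (proj2_sig H) hd) as (r0 & escape).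
  set (R := Rabs r0).
  destruct (S_bump_diff (Cmul (RtoC (- R)) c)) as (x & h).
  rewrite hc, vsub_scal in h.
  destruct (Req_dec (k x) 0) as [kx | kx].
  - rewrite kx in h. replace (Cmul (Cmul (RtoC (- R)) c) (RtoC 0)) with C0 in h
      by (apply Cplx_ext; simpl; ring).
    rewrite vscal_0l, vsub_0r in h.
    apply (escape (R + 1) x); [unfold R; pose proof (Rle_abs r0); lra|].
    rewrite <- h, hc, vscalA. f_equal. apply Cplx_ext; simpl; ring.
  - rewrite (H_off x kx), <- (vscal_0l u), vsub_scal in h.
    apply vscal_inj in h; [|exact hu].
    apply hd. rewrite hc. replace c with C0; [apply vscal_0l|].
    pose proof (k01 x). assert (0 <= R) by apply Rabs_pos.
    destruct c as [c1 c2]. injection h; simpl; intros e2 e1.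
    assert (pos : 0 < 1 + R - R * k x) by nra.
    apply Cplx_ext; simpl.
    + apply (Rmult_eq_reg_r (1 + R - R * k x)); [nra | lra].
    + apply (Rmult_eq_reg_r (1 + R - R * k x)); [nra | lra].
Qed.

End Bump.

(* m = (1 - 2k)^+ vanishes wherever (2k - 1)^+ is nonzero, so S (m G) = 0; hence
   S G = (1 - m x) G x, which lies in V by convexity since G x is in V where k x <> 0. *)
Lemma S_vanish G : proj1_sig G x0 = vzero -> S G = vzero.
Proof.
  intro G0. apply NNPP; intro hne.
  destruct (hE (S G) vzero hne) as (U & N & oU & oN & US & N0 & disj).
  destruct (convex_nbhds N) as (V & (O & oO & O0 & OV) & cV & VN).
  { exists N; repeat split; auto. }
  set (W := fun x => O (proj1_sig G x)).
  assert (oW : is_open tX W) by (apply (proj2_sig G); exact oO).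
  assert (W0 : W x0) by (unfold W; rewrite G0; exact O0).
  destruct (UrysohnBridge.urysohn_bump X tX x0 cX hX W oW W0) as (k & hk & k01 & kx0 & kW).
  set (m := fun x => Rmax (1 + -2 * k x) 0).
  assert (hm : ccont tX (realc m)).
  { apply ccont_real, rcont_pos_part, rcont_add; [apply rcont_const | apply rcont_scal, hk]. }
  assert (SGm : S (smul (realc m) G) = vzero).
  { apply (S_bump_eq0 _ (fun x => Rmax (2 * k x + -1) 0)).
    - apply rcont_pos_part, rcont_add; [apply rcont_scal, hk | apply rcont_const].
    - intro x; pose proof (k01 x); unfold Rmax; destruct Rle_dec; lra.
    - rewrite kx0; unfold Rmax; destruct Rle_dec; lra.
    - intros x hx. rewrite smul_val by exact hm.
      replace (realc m x) with C0; [apply vscal_0l|].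
      unfold realc, m, Rmax in *. destruct Rle_dec; [contradiction|].
      destruct Rle_dec; [reflexivity | lra]. }
  destruct (S_diff G (smul (realc m) G)) as (x & h).
  rewrite SGm, vsub_0r, smul_val in h by exact hm.
  rewrite <- (vscal1 E (proj1_sig G x)) in h at 1. rewrite vsub_scal in h.
  assert (VS : V (S G)).
  { rewrite h. pose proof (k01 x). destruct (classic (W x)) as [w | nw].
    - assert (ht : 0 <= 1 - m x <= 1) by (unfold m, Rmax; destruct Rle_dec; lra).
      pose proof (cV _ _ _ (OV _ w) (OV _ O0) ht) as hv.
      rewrite vscal_0r, vadd0 in hv. replace (Csub C1 (realc m x)) with (RtoC (1 - m x)); auto.
      apply Cplx_ext; unfold realc; simpl; ring.
    - replace (Csub C1 (realc m x)) with C0; [rewrite vscal_0l; auto|].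
      unfold realc, m. rewrite (kW x nw). unfold Rmax; destruct Rle_dec; [lra|].
      apply Cplx_ext; simpl; ring. }
  exact (disj _ US (VN _ VS)).
Qed.

Lemma S_eval F : S F = proj1_sig F x0.
Proof.
  set (F' := cxe_sub tX tE Ha Hs F (cxe_const tX tE (proj1_sig F x0))).
  assert (SF' : S F' = vzero) by (apply S_vanish; apply vaddN).
  destruct (S_diff F F') as (x & h). rewrite SF', vsub_0r in h.
  simpl in h. rewrite vsub_subl in h. exact h.
Qed.

End AtPoint.
End Direction.

Theorem range_operator_eval : (exists u : E, u <> vzero) ->
  exists x0, forall F, S F = proj1_sig F x0.
Proof.
  intros (u & hu). destruct (S_tens_eval u hu) as (x0 & hx0).
  exists x0. exact (S_eval u hu x0 hx0).
Qed.

End RangeOperator.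

Theorem theorem1p1
  (X Y : Type) (tX : topology X) (tY : topology Y)
  (E : cvs) (tE : topology E)
  (HX : inhabited X /\ compact_space tX /\ hausdorff tX)
  (HY : inhabited Y /\ compact_space tY /\ hausdorff tY)
  (HE : locally_convex E tE)
  (HEnz : exists v : E, v <> vzero)
  (T : CXE tX E tE -> CXE tY E tE)
  (HT : forall F G : CXE tX E tE, forall y : Y, exists x : X,
      vsub (proj1_sig (T F) y) (proj1_sig (T G) y) = vsub (proj1_sig F x) (proj1_sig G x)) :
  (exists phi : Y -> X, continuous tY tX phi /\
     forall (F : CXE tX E tE) (y : Y),
       proj1_sig (T F) y = vadd (proj1_sig (T (zeroCXE tX E tE)) y) (proj1_sig F (phi y)))
  /\
  ((forall y, proj1_sig (T (zeroCXE tX E tE)) y = vzero) ->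
     (forall F G H : CXE tX E tE,
        (forall x, proj1_sig H x = vadd (proj1_sig F x) (proj1_sig G x)) ->
        forall y, proj1_sig (T H) y = vadd (proj1_sig (T F) y) (proj1_sig (T G) y)) /\
     (forall (a : Cplx) (F H : CXE tX E tE),
        (forall x, proj1_sig H x = vscal a (proj1_sig F x)) ->
        forall y, proj1_sig (T H) y = vscal a (proj1_sig (T F) y))).
Proof.
  destruct HX as (inhX & cX & hX). destruct HE as (hE & Ha & Hs & convex_nbhds).
  set (T0 := T (zeroCXE tX E tE)).
  set (S y F := vsub (proj1_sig (T F) y) (proj1_sig T0 y)).
  assert (hS : forall y, exists x, forall F, S y F = proj1_sig F x).
  { intro y. apply (range_operator_eval tX tE cX hX hE Ha Hs convex_nbhds (S y)); auto.
    - intros F G. unfold S. rewrite vsub_subr. apply HT.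
    - apply vaddN. }
  set (phi y := epsilon inhX (fun x => forall F, S y F = proj1_sig F x)).
  assert (hphi : forall y F, S y F = proj1_sig F (phi y))
    by (intro y; apply (epsilon_spec inhX (fun x => forall F, S y F = proj1_sig F x)), hS).
  assert (decomp : forall F y, proj1_sig (T F) y = vadd (proj1_sig T0 y) (proj1_sig F (phi y)))
    by (intros F y; apply vsub_eq, hphi).
  split.
  - exists phi. split; [|exact decomp].
    apply (continuous_of_comp tX tY tE phi cX hX hE Hs HEnz). intro F.
    replace (fun y => proj1_sig F (phi y)) with (fun y => S y F)
      by (apply functional_extensionality; intro y; apply hphi).
    apply (cont_sub tY tE _ _ Ha Hs); [apply (proj2_sig (T F)) | apply (proj2_sig T0)].
  - intros hz.
    assert (eval : forall F y, proj1_sig (T F) y = proj1_sig F (phi y))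
      by (intros F y; rewrite decomp; fold T0; rewrite hz; apply vadd0l).
    split; intros; rewrite !eval; auto.
Qed.
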